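(* Let $\mathsf Y=\mathsf Y_1\times\cdots\times\mathsf Y_L$ be a product of Euclidean spaces and let $S:\mathsf Y\to\mathsf Y$ be a firmly non-expansive operator with domain $\mathsf Y$, written $S(\zeta)=(S_1(\zeta),\dots,S_L(\zeta))$ with $S_\ell(\zeta)\in\mathsf Y_\ell$. For $\ell=1,\dots,L$ define $\hat S_\ell:\mathsf Y\to\mathsf Y$ by $$\hat S_\ell(\zeta)=(\zeta_1,\dots,\zeta_{\ell-1},S_\ell(\zeta),\zeta_{\ell+1},\dots,\zeta_L).$$ Let $(\xi^k)_{k\ge1}$ be i.i.d. random variables on a probability space, valued in $\{1,\dots,L\}$, with $\mathbb P[\xi^1=\ell]=p_\ell>0$ for all $\ell$. Assume the fixed point set $\mathrm{fix}(S)$ is nonempty. Then for any initial value $\zeta^0\in\mathsf Y$, the sequence $\zeta^{k+1}=\hat S_{\xi^{k+1}}(\zeta^k)$ converges almost surely to a random variable taking values in $\mathrm{fix}(S)$.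
   Context: An operator $S$ on a Euclidean space $\mathsf Y$ is firmly non-expansive if $\langle x-x',S(x)-S(x')\rangle\ge\|S(x)-S(x')\|^2$ for all $x,x'$ (in particular it is single valued). $\mathrm{fix}(S)=\{\zeta:S(\zeta)=\zeta\}$. *)

From Stdlib Require Import Reals List.
Open Scope R_scope.

Fixpoint rsum (n : nat) (f : nat -> R) : R :=
  match n with O => 0 | S m => rsum m f + f m end.

(** The product space  Y = Y_0 x ... x Y_{L-1},  Y_l = R^(d l).
    An element is represented by  z : nat -> nat -> R,  z l i  being the
    i-th coordinate of the l-th block; only the entries with l < L, i < d l
    are meaningful (the others are ignored by every notion below). *)
Definition Yvec := nat -> nat -> R.

Definition Yeq (L : nat) (d : nat -> nat) (x y : Yvec) : Prop :=
  forall l i, (l < L)%nat -> (i < d l)%nat -> x l i = y l i.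

Definition Yip (L : nat) (d : nat -> nat) (x y : Yvec) : R :=
  rsum L (fun l => rsum (d l) (fun i => x l i * y l i)).

Definition Ysub (x y : Yvec) : Yvec := fun l i => x l i - y l i.

Definition firmly_nonexpansive (L : nat) (d : nat -> nat) (S : Yvec -> Yvec) : Prop :=
  forall x x', Yip L d (Ysub x x') (Ysub (S x) (S x'))
               >= Yip L d (Ysub (S x) (S x')) (Ysub (S x) (S x')).

Definition fixS (L : nat) (d : nat -> nat) (S : Yvec -> Yvec) (z : Yvec) : Prop :=
  Yeq L d (S z) z.

Definition Shat (S : Yvec -> Yvec) (l : nat) (z : Yvec) : Yvec :=
  fun l' i => if Nat.eqb l' l then S z l i else z l' i.

Record ProbSpace := {
  Omega : Type;
  meas : (Omega -> Prop) -> Prop;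
  Pr : (Omega -> Prop) -> R;
  meas_full : meas (fun _ => True);
  meas_compl : forall A, meas A -> meas (fun w => ~ A w);
  meas_cunion : forall A : nat -> Omega -> Prop,
      (forall n, meas (A n)) -> meas (fun w => exists n, A n w);
  Pr_nonneg : forall A, meas A -> 0 <= Pr A;
  Pr_full : Pr (fun _ => True) = 1;
  Pr_sigma_additive : forall A : nat -> Omega -> Prop,
      (forall n, meas (A n)) ->
      (forall n m w, n <> m -> A n w -> A m w -> False) ->
      infinite_sum (fun n => Pr (A n)) (Pr (fun w => exists n, A n w))
}.

Definition indep_discrete (Ps : ProbSpace) (xi : nat -> Omega Ps -> nat) : Prop :=
  forall (ks : list nat) (a : nat -> nat),
    NoDup ks -> (forall k, In k ks -> (1 <= k)%nat) ->
    Pr Ps (fun w => forall k, In k ks -> xi k w = a k)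
    = fold_right (fun k acc => Pr Ps (fun w => xi k w = a k) * acc) 1 ks.

Fixpoint rbcd_iter (S : Yvec -> Yvec) (xi : nat -> nat) (z0 : Yvec) (k : nat) : Yvec :=
  match k with
  | O => z0
  | Datatypes.S k' => Shat S (xi (Datatypes.S k')) (rbcd_iter S xi z0 k')
  end.

(* Write the k-th iterate as a function of the history h = [xi_k; ...; xi_1]
   of the drawn blocks.  For a fixed point z of S, the weighted distance
   W(x, z) = sum_l (1 / p_l) ||x_l - z_l||^2 satisfies, by firm
   non-expansiveness, sum_l p_l W(hat S_l x, z) <= W(x, z) - ||S x - x||^2;
   hence W(zeta^k, z), and W(zeta^k, z) + sum_{j<k} ||S zeta^j - zeta^j||^2,
   are nonnegative supermartingales of the history.  A nonnegative
   supermartingale converges almost surely (Markov's inequality excludes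
   divergence to infinity, Doob's upcrossing inequality excludes oscillation),
   so almost surely the residuals ||S zeta^k - zeta^k|| vanish and W(zeta^k, z)
   converges for countably many fixed points z, chosen close to the iterates.
   A deterministic Opial-type argument then shows that the iterates converge to
   a fixed point. *)

From Stdlib Require Import Reals List Lra Lia Classical ClassicalEpsilon
  FunctionalExtensionality PropExtensionality.
Open Scope R_scope.

Lemma rsum_ext n f g :
  (forall k, (k < n)%nat -> f k = g k) -> rsum n f = rsum n g.
Proof.
  induction n as [|n IH]; simpl; intros H; auto.
  rewrite IH by (intros; apply H; lia). rewrite H by lia. auto.
Qed.

Lemma rsum_plus n f g : rsum n (fun k => f k + g k) = rsum n f + rsum n g.
Proof. induction n; simpl; [lra|]. rewrite IHn; lra. Qed.

Lemma rsum_minus n f g : rsum n (fun k => f k - g k) = rsum n f - rsum n g.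
Proof. induction n; simpl; [lra|]. rewrite IHn; lra. Qed.

Lemma rsum_scal n c f : rsum n (fun k => c * f k) = c * rsum n f.
Proof. induction n; simpl; [lra|]. rewrite IHn; lra. Qed.

Lemma rsum_const0 n : rsum n (fun _ => 0) = 0.
Proof. induction n; simpl; [lra|]. rewrite IHn; lra. Qed.

Lemma rsum_le n f g :
  (forall k, (k < n)%nat -> f k <= g k) -> rsum n f <= rsum n g.
Proof.
  induction n as [|n IH]; simpl; intros H; [lra|].
  assert (f n <= g n) by (apply H; lia).
  assert (rsum n f <= rsum n g) by (apply IH; intros; apply H; lia).
  lra.
Qed.

Lemma rsum_nonneg n f : (forall k, (k < n)%nat -> 0 <= f k) -> 0 <= rsum n f.
Proof. intros H. rewrite <- (rsum_const0 n). apply rsum_le; auto. Qed.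

Lemma rsum_term_le n f k :
  (forall j, (j < n)%nat -> 0 <= f j) -> (k < n)%nat -> f k <= rsum n f.
Proof.
  induction n as [|n IH]; simpl; intros H Hk; [lia|].
  assert (0 <= f n) by (apply H; lia).
  destruct (Nat.eq_dec k n) as [->|Hne].
  - assert (0 <= rsum n f) by (apply rsum_nonneg; intros; apply H; lia). lra.
  - assert (f k <= rsum n f) by (apply IH; [intros; apply H|]; lia). lra.
Qed.

Lemma rsum_zero_each n f :
  (forall j, (j < n)%nat -> 0 <= f j) -> rsum n f = 0 ->
  forall k, (k < n)%nat -> f k = 0.
Proof.
  intros H0 Hs k Hk.
  pose proof (rsum_term_le n f k H0 Hk). pose proof (H0 k Hk). lra.
Qed.

Lemma rsum_upd n f l v : (l < n)%nat ->
  rsum n (fun j => if Nat.eqb j l then v else f j) = rsum n f + (v - f l).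
Proof.
  induction n as [|n IH]; simpl; intros H; [lia|].
  destruct (Nat.eqb_spec n l) as [->|Hne].
  - rewrite (rsum_ext l _ f); [lra|].
    intros k Hk. destruct (Nat.eqb_spec k l); [lia|auto].
  - rewrite IH by lia. lra.
Qed.

Lemma sum_f_R0_rsum f N : sum_f_R0 f N = rsum (S N) f.
Proof. induction N; simpl; [lra|]. simpl in IHN. rewrite IHN. lra. Qed.

Lemma rsum_trunc n m f : (n <= m)%nat ->
  (forall k, (n <= k)%nat -> f k = 0) -> rsum m f = rsum n f.
Proof.
  intros H. induction H as [|m H IH]; intros Hz; auto.
  simpl. rewrite IH, Hz by (auto; lia). lra.
Qed.

(* Cauchy criterion with tolerances 1/(m+1): it quantifies over countably many
   tolerances only, which keeps the corresponding events measurable. *)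
Definition CauchyS (u : nat -> R) : Prop :=
  forall m : nat, exists N, forall j k, (N <= j)%nat -> (N <= k)%nat ->
    Rabs (u j - u k) <= / INR (S m).

Definition InftyS (u : nat -> R) : Prop :=
  forall K : nat, exists N, forall n, (N <= n)%nat -> INR K <= u n.

Definition grid (M i : nat) : R := INR i / INR (S M).

Definition OscS (u : nat -> R) (M i : nat) : Prop :=
  (forall N, exists n, (N <= n)%nat /\ u n < grid M i) /\
  (forall N, exists n, (N <= n)%nat /\ grid M (S i) < u n).

Lemma INR_S_pos n : 0 < INR (S n).
Proof. apply lt_0_INR; lia. Qed.

Lemma inv_INR_S_pos n : 0 < / INR (S n).
Proof. apply Rinv_0_lt_compat, INR_S_pos. Qed.

Lemma grid_S M i : grid M (S i) = grid M i + / INR (S M).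
Proof. unfold grid. rewrite S_INR. field. pose proof (INR_S_pos M). lra. Qed.

Lemma grid_nonneg M i : 0 <= grid M i.
Proof.
  unfold grid. apply Rmult_le_pos; [apply pos_INR|left; apply inv_INR_S_pos].
Qed.

Lemma grid_lt M i : grid M i < grid M (S i).
Proof. rewrite grid_S. pose proof (inv_INR_S_pos M). lra. Qed.

Lemma switch_point (P : nat -> Prop) n :
  P 0%nat -> ~ P n -> exists i, P i /\ ~ P (S i).
Proof. intros H0 Hn. induction n. tauto. destruct (classic (P n)); eauto. Qed.

(* A nonnegative sequence that neither tends to infinity nor oscillates
   across any grid interval is Cauchy.  (Given m, take the finer grid of mesh
   1/(2m+2); the sequence eventually stays between two grid points at
   distance 1/(m+1).) *)
Lemma path_trichotomy (u : nat -> R) : (forall n, 0 <= u n) ->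
  CauchyS u \/ InftyS u \/ exists M i, OscS u M i.
Proof.
  intros Hu. destruct (classic (InftyS u)) as [|HI]; auto.
  destruct (classic (exists M i, OscS u M i)) as [|HO]; auto. left.
  assert (HK : exists K : nat, forall N, exists n, (N <= n)%nat /\ u n < INR K).
  { apply NNPP; intros H. apply HI. intros K. apply NNPP; intros H2.
    apply H. exists K. intros N. apply NNPP; intros H3. apply H2. exists N.
    intros n Hn. apply Rnot_lt_le. intros H4. apply H3; eauto. }
  destruct HK as [K HK]. intros m. set (M := (2 * m + 1)%nat).
  set (P := fun i => exists N, forall n, (N <= n)%nat -> grid M i <= u n).
  assert (P0 : P 0%nat).
  { exists 0%nat. intros n _. unfold grid. simpl. unfold Rdiv.
    rewrite Rmult_0_l; auto. }
  assert (PK : ~ P (K * S M)%nat).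
  { intros [N HN]. destruct (HK N) as [n [Hn Hlt]]. specialize (HN n Hn).
    unfold grid in HN. rewrite mult_INR in HN. unfold Rdiv in HN.
    rewrite Rmult_assoc, Rinv_r in HN by (pose proof (INR_S_pos M); lra). lra. }
  destruct (switch_point P _ P0 PK) as [i [[N1 H1] nPi]].
  assert (HB : exists N, forall n, (N <= n)%nat -> u n <= grid M (S (S i))).
  { apply NNPP; intros H. apply HO. exists M, (S i). split.
    - intros N. apply NNPP; intros H2. apply nPi. exists N. intros n Hn.
      apply Rnot_lt_le. intros H4. apply H2; eauto.
    - intros N. apply NNPP; intros H2. apply H. exists N. intros n Hn.
      apply Rnot_lt_le. intros H4. apply H2; eauto. }
  destruct HB as [N2 H2]. exists (N1 + N2)%nat. intros j k Hj Hk.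
  assert (E : grid M (S (S i)) = grid M i + / INR (S m)).
  { rewrite !grid_S. unfold M. rewrite !S_INR, plus_INR, mult_INR. simpl.
    field. pose proof (pos_INR m). lra. }
  pose proof (H1 j ltac:(lia)). pose proof (H1 k ltac:(lia)).
  pose proof (H2 j ltac:(lia)). pose proof (H2 k ltac:(lia)).
  apply Rabs_le. lra.
Qed.

Lemma cauchy_cv (u : nat -> R) : CauchyS u -> exists r, Un_cv u r.
Proof.
  intros H. destruct (R_complete u) as [r Hr]; eauto.
  intros e He. destruct (archimed_cor1 e He) as [m [Hm Hm0]].
  destruct (H m) as [N HN]. exists N. intros j k Hj Hk. unfold Rdist.
  eapply Rle_lt_trans; [apply HN; auto|]. eapply Rle_lt_trans; [|apply Hm].
  apply Rinv_le_contravar. apply lt_0_INR; lia. apply le_INR; lia.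
Qed.

Lemma cv_cauchyS (u : nat -> R) r : Un_cv u r -> CauchyS u.
Proof.
  intros H m. assert (He : 0 < / INR (S m) / 2).
  { pose proof (inv_INR_S_pos m). lra. }
  destruct (H _ He) as [N HN]. exists N. intros j k Hj Hk.
  pose proof (HN j Hj). pose proof (HN k Hk). unfold Rdist in *.
  replace (u j - u k) with ((u j - r) - (u k - r)) by ring.
  eapply Rle_trans; [apply Rabs_triang|]. rewrite Rabs_Ropp. lra.
Qed.

Lemma cauchy_bounded (u : nat -> R) : CauchyS u ->
  exists N, forall n, (N <= n)%nat -> u n <= u N + 1.
Proof.
  intros H. destruct (H 0%nat) as [N HN]. exists N. intros n Hn.
  specialize (HN n N Hn (le_n _)). simpl in HN. rewrite Rinv_1 in HN.
  pose proof (Rle_abs (u n - u N)). lra.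
Qed.

Lemma cv_increments (u : nat -> R) r : Un_cv u r ->
  forall e, 0 < e -> exists N, forall n, (N <= n)%nat -> Rabs (u (S n) - u n) < e.
Proof.
  intros H e He. destruct (H (e / 2)) as [N HN]; [lra|]. exists N. intros n Hn.
  pose proof (HN n Hn). pose proof (HN (S n) ltac:(lia)). unfold Rdist in *.
  replace (u (S n) - u n) with ((u (S n) - r) - (u n - r)) by ring.
  eapply Rle_lt_trans; [apply Rabs_triang|]. rewrite Rabs_Ropp. lra.
Qed.

Lemma cv_const c : Un_cv (fun _ => c) c.
Proof.
  intros e He. exists 0%nat. intros. unfold Rdist. rewrite Rminus_diag, Rabs_R0; auto.
Qed.

Lemma rsum_cv n (f : nat -> nat -> R) (g : nat -> R) :
  (forall j, (j < n)%nat -> Un_cv (fun k => f k j) (g j)) ->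
  Un_cv (fun k => rsum n (f k)) (rsum n g).
Proof.
  induction n; intros H; simpl.
  - apply cv_const.
  - apply CV_plus; [apply IHn; intros|]; apply H; lia.
Qed.

Lemma le_all_pos_zero a : 0 <= a -> (forall e, 0 < e -> a <= e) -> a = 0.
Proof. intros H0 H. destruct (Rle_dec a 0). lra. specialize (H (a / 2)). lra. Qed.

Lemma abs_le_of_sq_le (t C : R) : 0 <= C -> t ^ 2 <= C -> Rabs t <= C + 1.
Proof. intros HC H. unfold Rabs. destruct (Rcase_abs t); nra. Qed.

Definition limit_of (u : nat -> R) : R :=
  match excluded_middle_informative (exists r, Un_cv u r) with
  | left H => proj1_sig (constructive_indefinite_description _ H)
  | right _ => 0
  end.

Lemma limit_of_spec u : (exists r, Un_cv u r) -> Un_cv u (limit_of u).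
Proof.
  intros H. unfold limit_of. destruct (excluded_middle_informative _); [|tauto].
  destruct (constructive_indefinite_description _ _); auto.
Qed.

Definition strictly_incr (phi : nat -> nat) : Prop :=
  forall k, (phi k < phi (S k))%nat.

Lemma strictly_incr_ge phi : strictly_incr phi -> forall k, (k <= phi k)%nat.
Proof. intros H k. induction k. lia. specialize (H k). lia. Qed.

Lemma strictly_incr_comp phi psi :
  strictly_incr phi -> strictly_incr psi -> strictly_incr (fun k => phi (psi k)).
Proof.
  intros Hphi Hpsi k.
  assert (Hm : forall j k, (j < k)%nat -> (phi j < phi k)%nat).
  { intros j k' Hjk. induction Hjk; [apply Hphi|]. specialize (Hphi m). lia. }
  apply Hm, Hpsi.
Qed.

Lemma subseq_cv (u : nat -> R) c (phi : nat -> nat) :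
  (forall k, (k <= phi k)%nat) -> Un_cv u c -> Un_cv (fun k => u (phi k)) c.
Proof.
  intros Hphi H e He. destruct (H e He) as [N HN]. exists N. intros n Hn.
  apply HN. specialize (Hphi n). lia.
Qed.

Lemma bw_subseq (u : nat -> R) a b : (forall n, a <= u n <= b) ->
  exists phi, strictly_incr phi /\ exists c, Un_cv (fun k => u (phi k)) c.
Proof.
  intros H.
  destruct (Bolzano_Weierstrass u (fun c => a <= c <= b) (compact_P3 a b) H) as [l Hl].
  assert (Hp : forall N k : nat, exists q, (N <= q)%nat /\ Rabs (u q - l) < / INR (S k)).
  { intros N k. destruct (Hl (disc l (mkposreal _ (inv_INR_S_pos k))) N) as [q [Hq1 Hq2]].
    - exists (mkposreal _ (inv_INR_S_pos k)). intros y Hy; auto.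
    - exists q; split; auto. }
  set (pick := fun N k => proj1_sig (constructive_indefinite_description _ (Hp N k))).
  assert (Hpick : forall N k, (N <= pick N k)%nat /\ Rabs (u (pick N k) - l) < / INR (S k)).
  { intros N k. unfold pick. destruct (constructive_indefinite_description _ _); simpl; auto. }
  set (phi := fix phi k := match k with
                           | O => pick 0%nat 0%nat
                           | S k' => pick (S (phi k')) (S k') end).
  exists phi. split.
  - intros k. simpl. destruct (Hpick (S (phi k)) (S k)). lia.
  - exists l. intros e He. destruct (archimed_cor1 e He) as [N [HN HN0]].
    exists N. intros n Hn. unfold Rdist.
    assert (Rabs (u (phi n) - l) < / INR (S n)) by (destruct n; apply Hpick).
    eapply Rlt_trans; eauto. eapply Rle_lt_trans; [|apply HN].
    apply Rinv_le_contravar. apply lt_0_INR; lia. apply le_INR; lia.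
Qed.

Lemma bw_subseq_coords (cs : list (nat * nat)) (x : nat -> Yvec) :
  (forall l i, In (l, i) cs -> exists a b, forall n, a <= x n l i <= b) ->
  exists phi, strictly_incr phi /\
    exists c : Yvec, forall l i, In (l, i) cs -> Un_cv (fun k => x (phi k) l i) (c l i).
Proof.
  induction cs as [|[l i] cs IH]; intros H.
  - exists (fun k => k). split. intros k; lia. exists (fun _ _ => 0). intros l i [].
  - destruct IH as [phi [Hphi [c Hc]]]. intros l' i' Hin; apply H; simpl; auto.
    destruct (H l i (or_introl eq_refl)) as [a [b Hab]].
    destruct (bw_subseq (fun k => x (phi k) l i) a b) as [psi [Hpsi [c0 Hc0]]].
    { intros; apply Hab. }
    exists (fun k => phi (psi k)). split; [apply strictly_incr_comp; auto|].
    exists (fun l' i' => if andb (Nat.eqb l' l) (Nat.eqb i' i) then c0 else c l' i').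
    intros l' i' Hin. destruct (andb (Nat.eqb l' l) (Nat.eqb i' i)) eqn:E.
    + apply Bool.andb_true_iff in E as [E1 E2].
      apply Nat.eqb_eq in E1, E2. subst. exact Hc0.
    + apply (subseq_cv (fun k => x (phi k) l' i') _ psi); [apply strictly_incr_ge; auto|].
      apply Hc. destruct Hin as [Hin|Hin]; auto. injection Hin; intros; subst.
      rewrite !Nat.eqb_refl in E; discriminate.
Qed.

Definition coords (L : nat) (d : nat -> nat) : list (nat * nat) :=
  flat_map (fun l => map (fun i => (l, i)) (seq 0 (d l))) (seq 0 L).

Lemma coords_In L d l i : In (l, i) (coords L d) <-> (l < L)%nat /\ (i < d l)%nat.
Proof.
  unfold coords. rewrite in_flat_map. split.
  - intros [l' [H1 H2]]. apply in_map_iff in H2. destruct H2 as [i' [H3 H4]].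
    injection H3; intros; subst. apply in_seq in H1. apply in_seq in H4. lia.
  - intros [H1 H2]. exists l. split. apply in_seq; lia.
    apply in_map_iff. exists i. split; auto. apply in_seq; lia.
Qed.

(** * Elementary probability on the abstract probability space *)

Lemma pred_ext {T} (A B : T -> Prop) : (forall w, A w <-> B w) -> A = B.
Proof.
  intros H. apply functional_extensionality; intros w.
  apply propositional_extensionality. auto.
Qed.

Section Probability.
Variable Ps : ProbSpace.

Lemma Pr_ext A B : (forall w, A w <-> B w) -> Pr Ps A = Pr Ps B.
Proof. intros H. rewrite (pred_ext A B H). auto. Qed.

Lemma meas_ext A B : (forall w, A w <-> B w) -> meas Ps A -> meas Ps B.
Proof. intros H. rewrite (pred_ext A B H). auto. Qed.

Lemma meas_false : meas Ps (fun _ => False).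
Proof. apply (meas_ext (fun w => ~ True)); [tauto|]. apply meas_compl, meas_full. Qed.

Lemma meas_const (P : Prop) : meas Ps (fun _ => P).
Proof.
  destruct (classic P).
  - apply (meas_ext (fun _ => True)); [tauto|apply meas_full].
  - apply (meas_ext (fun _ => False)); [tauto|apply meas_false].
Qed.

Lemma meas_forall (A : nat -> Omega Ps -> Prop) :
  (forall n, meas Ps (A n)) -> meas Ps (fun w => forall n, A n w).
Proof.
  intros H. apply (meas_ext (fun w => ~ exists n, ~ A n w)).
  - intros w; split.
    + intros H1 n. apply NNPP; intros H2; apply H1; eauto.
    + intros H1 [n Hn]; auto.
  - apply meas_compl, meas_cunion. intros; apply meas_compl; auto.
Qed.

Lemma meas_or A B : meas Ps A -> meas Ps B -> meas Ps (fun w => A w \/ B w).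
Proof.
  intros HA HB.
  apply (meas_ext (fun w => exists n, (n = 0%nat /\ A w) \/ (n <> 0%nat /\ B w))).
  - intros w; split.
    + intros [n [[_ H]|[_ H]]]; auto.
    + intros [H|H]; [exists 0%nat|exists 1%nat]; auto.
  - apply meas_cunion. intros n. destruct (Nat.eq_dec n 0).
    + apply (meas_ext A); auto. intros; tauto.
    + apply (meas_ext B); auto. intros; tauto.
Qed.

Lemma meas_and A B : meas Ps A -> meas Ps B -> meas Ps (fun w => A w /\ B w).
Proof.
  intros HA HB. apply (meas_ext (fun w => ~ (~ A w \/ ~ B w))); [intros w; tauto|].
  apply meas_compl, meas_or; apply meas_compl; auto.
Qed.

Lemma meas_impl_const (P : Prop) B : meas Ps B -> meas Ps (fun w => P -> B w).
Proof.
  intros HB. apply (meas_ext (fun w => ~ P \/ B w)); [intros w; tauto|].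
  apply meas_or; auto. apply meas_const.
Qed.

Lemma Pr_empty : Pr Ps (fun _ => False) = 0.
Proof.
  pose proof (Pr_sigma_additive Ps (fun _ _ => False) (fun _ => meas_false)) as H.
  cbv beta in H.
  rewrite (Pr_ext (fun w => exists n : nat, False) (fun _ => False)) in H by firstorder.
  specialize (H ltac:(tauto)). set (c := Pr Ps (fun _ => False)) in *.
  (* The partial sums (n+1) c converge, so their increments c tend to 0. *)
  assert (Hc : forall e, 0 < e -> Rabs c < e).
  { intros e He. destruct (cv_increments _ _ H e He) as [N HN].
    specialize (HN N (le_n N)). simpl in HN.
    replace (sum_f_R0 (fun _ => c) N + c - sum_f_R0 (fun _ => c) N) with c in HN by ring.
    exact HN. }
  destruct (Req_dec c 0) as [|Hne]; auto.
  specialize (Hc (Rabs c) (Rabs_pos_lt c Hne)). lra.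
Qed.

Lemma Pr_finite_union n (A : nat -> Omega Ps -> Prop) :
  (forall k, (k < n)%nat -> meas Ps (A k)) ->
  (forall j k w, (j < n)%nat -> (k < n)%nat -> j <> k -> A j w -> A k w -> False) ->
  Pr Ps (fun w => exists k, (k < n)%nat /\ A k w) = rsum n (fun k => Pr Ps (A k)).
Proof.
  intros Hm Hd. set (B := fun k w => (k < n)%nat /\ A k w).
  assert (HB : forall k, meas Ps (B k)).
  { intros k. unfold B. destruct (Compare_dec.lt_dec k n).
    - apply (meas_ext (A k)); [intros; tauto|auto].
    - apply (meas_ext (fun _ => False)); [intros; tauto|apply meas_false]. }
  assert (H : infinite_sum (fun k => Pr Ps (B k)) (Pr Ps (fun w => exists k, B k w))).
  { apply Pr_sigma_additive; auto.
    intros j k w Hjk [Hj Aj] [Hk Ak]. eapply Hd; eauto. }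
  assert (Hc : Un_cv (fun N => sum_f_R0 (fun k => Pr Ps (B k)) N)
                 (rsum n (fun k => Pr Ps (A k)))).
  { intros e He. exists n. intros N HN. rewrite sum_f_R0_rsum.
    rewrite (rsum_trunc n).
    - rewrite (rsum_ext n _ (fun k => Pr Ps (A k))).
      + unfold Rdist. rewrite Rminus_diag, Rabs_R0; auto.
      + intros k Hk. apply Pr_ext. unfold B. intros; tauto.
    - lia.
    - intros k Hk. rewrite <- Pr_empty. apply Pr_ext. unfold B. intros; lia. }
  apply (UL_sequence _ _ _ H Hc).
Qed.

Lemma Pr_union2 A B : meas Ps A -> meas Ps B -> (forall w, A w -> B w -> False) ->
  Pr Ps (fun w => A w \/ B w) = Pr Ps A + Pr Ps B.
Proof.
  intros HA HB Hd.
  set (F := fun k w => (k = 0%nat /\ A w) \/ (k = 1%nat /\ B w)).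
  rewrite (Pr_ext _ (fun w => exists k, (k < 2)%nat /\ F k w)).
  - rewrite Pr_finite_union.
    + simpl. rewrite (Pr_ext (F 0%nat) A), (Pr_ext (F 1%nat) B);
        unfold F; try (intros; intuition lia). lra.
    + intros k Hk. unfold F. destruct (Nat.eq_dec k 0) as [->|].
      * apply (meas_ext A); auto; intuition lia.
      * apply (meas_ext B); auto. intros; intuition lia.
    + intros j k w Hj Hk Hjk; unfold F.
      intros [[-> H1]|[-> H1]] [[-> H2]|[-> H2]]; try lia; eauto.
  - intros w; unfold F; split.
    + intros [H|H]; [exists 0%nat|exists 1%nat]; split; auto; lia.
    + intros [k [Hk [[_ H]|[_ H]]]]; auto.
Qed.

Lemma Pr_split A B : meas Ps A -> meas Ps B -> (forall w, A w -> B w) ->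
  Pr Ps B = Pr Ps A + Pr Ps (fun w => B w /\ ~ A w).
Proof.
  intros HA HB H. rewrite <- Pr_union2; auto.
  - apply Pr_ext. intros w; split.
    + intros Hb. destruct (classic (A w)); auto.
    + intros [?|[? ?]]; auto.
  - apply meas_and; auto. apply meas_compl; auto.
  - intros w ? [? ?]; auto.
Qed.

Lemma Pr_mono A B : meas Ps A -> meas Ps B -> (forall w, A w -> B w) -> Pr Ps A <= Pr Ps B.
Proof.
  intros HA HB H. rewrite (Pr_split A B) by auto.
  assert (0 <= Pr Ps (fun w => B w /\ ~ A w)); [|lra].
  apply Pr_nonneg, meas_and; auto. apply meas_compl; auto.
Qed.

Lemma Pr_compl A : meas Ps A -> Pr Ps (fun w => ~ A w) = 1 - Pr Ps A.
Proof.
  intros HA. rewrite <- (Pr_full Ps), (Pr_split A (fun _ => True)) by (auto; apply meas_full).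
  rewrite (Pr_ext (fun w => True /\ ~ A w) (fun w => ~ A w)) by tauto. lra.
Qed.

Lemma Pr_le1 A : meas Ps A -> Pr Ps A <= 1.
Proof. intros HA. rewrite <- (Pr_full Ps). apply Pr_mono; auto. apply meas_full. Qed.

Lemma incr_union_bound (A : nat -> Omega Ps -> Prop) c :
  (forall n, meas Ps (A n)) -> (forall n w, A n w -> A (S n) w) ->
  (forall n, Pr Ps (A n) <= c) -> Pr Ps (fun w => exists n, A n w) <= c.
Proof.
  intros Hm Hi Hc.
  set (D := fun n w => match n with O => A O w | S k => A (S k) w /\ ~ A k w end).
  assert (HD : forall n, meas Ps (D n)).
  { intros [|k]; unfold D; auto. apply meas_and; auto. apply meas_compl; auto. }
  assert (Hmono : forall n k w, (n <= k)%nat -> A n w -> A k w).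
  { intros n k w Hk. induction Hk; auto. }
  assert (Hdisj : forall n m w, n <> m -> D n w -> D m w -> False).
  { intros n m w Hnm.
    assert (G : forall a b, (a < b)%nat -> D a w -> D b w -> False).
    { intros a b Hab Ha Hb. destruct b as [|b]; [lia|]. destruct Hb as [_ Hb].
      apply Hb, (Hmono a); [lia|]. destruct a; simpl in Ha; tauto. }
    intros H1 H2. destruct (Compare_dec.lt_dec n m); [eapply G; eauto|].
    eapply (G m n); eauto; lia. }
  pose proof (Pr_sigma_additive Ps D HD Hdisj) as H.
  assert (Hs : forall N, sum_f_R0 (fun n => Pr Ps (D n)) N = Pr Ps (A N)).
  { induction N; simpl; auto. rewrite IHN, (Pr_split (A N) (A (S N))); auto. }
  assert (Eu : Pr Ps (fun w => exists n, D n w) = Pr Ps (fun w => exists n, A n w)).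
  { apply Pr_ext. intros w; split.
    - intros [n Hn]; exists n. destruct n; simpl in Hn; tauto.
    - intros [n Hn]. induction n; [exists 0%nat; auto|].
      destruct (classic (A n w)); auto. exists (S n); simpl; auto. }
  rewrite <- Eu. apply Rnot_lt_le; intros Hlt.
  destruct (H (Pr Ps (fun w => exists n, D n w) - c)) as [N HN]; [lra|].
  specialize (HN N (le_n _)). rewrite Hs in HN. specialize (Hc N).
  unfold Rdist in HN. rewrite Rabs_left1 in HN; lra.
Qed.

Lemma null_union (N : nat -> Omega Ps -> Prop) :
  (forall k, meas Ps (N k)) -> (forall k, Pr Ps (N k) = 0) ->
  Pr Ps (fun w => exists k, N k w) = 0.
Proof.
  intros Hm H0. set (A := fun n w => exists k, (k <= n)%nat /\ N k w).
  assert (HA : forall n, meas Ps (A n)).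
  { intros n. apply meas_cunion. intros k. apply meas_and; auto. apply meas_const. }
  assert (HAb : forall n, Pr Ps (A n) <= 0).
  { induction n.
    - rewrite (Pr_ext _ (N 0%nat)), H0; [lra|]. intros w; unfold A; split.
      + intros [k [Hk Hn]]. replace k with 0%nat in Hn by lia. auto.
      + intros; exists 0%nat; auto.
    - rewrite (Pr_split (A n) (A (S n))); auto.
      + assert (Pr Ps (fun w => A (S n) w /\ ~ A n w) <= Pr Ps (N (S n))); [|rewrite H0 in *; lra].
        apply Pr_mono; auto. apply meas_and; auto. apply meas_compl; auto.
        intros w [[k [Hk Hn]] Hnot]. destruct (Nat.eq_dec k (S n)) as [->|]; auto.
        exfalso; apply Hnot; exists k; split; auto; lia.
      + intros w [k [Hk Hn]]; exists k; split; auto. }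
  apply Rle_antisym.
  - rewrite (Pr_ext _ (fun w => exists n, A n w)).
    + apply incr_union_bound; auto. intros n w [k [Hk Hn]]; exists k; split; auto.
    + intros w; split.
      * intros [k Hk]; exists k, k; auto.
      * intros [n [k [_ Hk]]]; eauto.
  - apply Pr_nonneg, meas_cunion; auto.
Qed.

Lemma prob1_forall (A : nat -> Omega Ps -> Prop) :
  (forall k, meas Ps (A k)) -> (forall k, Pr Ps (A k) = 1) ->
  meas Ps (fun w => forall k, A k w) /\ Pr Ps (fun w => forall k, A k w) = 1.
Proof.
  intros Hm H1. split; [apply meas_forall; auto|].
  assert (Hn : Pr Ps (fun w => exists k, ~ A k w) = 0).
  { apply null_union; intros; [apply meas_compl; auto|].
    rewrite Pr_compl, H1; auto; lra. }
  rewrite (Pr_ext _ (fun w => ~ exists k, ~ A k w)).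
  - rewrite Pr_compl. lra. apply meas_cunion; intros; apply meas_compl; auto.
  - intros w; split.
    + intros H [k Hk]; auto.
    + intros H k; apply NNPP; intros Hk; apply H; eauto.
Qed.

Lemma prob1_and A B : meas Ps A -> meas Ps B -> Pr Ps A = 1 -> Pr Ps B = 1 ->
  Pr Ps (fun w => A w /\ B w) = 1.
Proof.
  intros HA HB H1 H2.
  destruct (prob1_forall (fun k w => if Nat.eqb k 0 then A w else B w)) as [_ H];
    try (intros [|k]; simpl; auto).
  rewrite <- H. apply Pr_ext. intros w; split.
  - intros [? ?] [|k]; simpl; auto.
  - intros Hk; split; [apply (Hk 0%nat)|apply (Hk 1%nat)].
Qed.

Lemma prob1_mono A B : meas Ps A -> meas Ps B -> Pr Ps A = 1 ->
  (forall w, A w -> B w) -> Pr Ps B = 1.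
Proof. intros HA HB H1 H. pose proof (Pr_mono A B HA HB H). pose proof (Pr_le1 B HB). lra. Qed.

Lemma null_of_bounds A c : meas Ps A -> (forall K : nat, Pr Ps A <= c / INR (S K)) ->
  Pr Ps A = 0.
Proof.
  intros HA H. pose proof (Pr_nonneg Ps A HA). apply Rle_antisym; auto.
  apply Rnot_lt_le; intros Hp.
  destruct (INR_unbounded (c / Pr Ps A)) as [K HK].
  specialize (H K). pose proof (INR_S_pos K) as HKp. rewrite S_INR in H, HKp.
  apply Rmult_le_compat_r with (r := INR K + 1) in H; [|lra].
  unfold Rdiv in H, HK. rewrite Rmult_assoc, Rinv_l in H by lra.
  apply Rmult_lt_compat_r with (r := Pr Ps A) in HK; auto.
  rewrite Rmult_assoc, Rinv_l in HK by lra. nra.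
Qed.

Lemma meas_limit_le (G : Omega Ps -> Prop) (u : nat -> Omega Ps -> R) (f : Omega Ps -> R) c :
  meas Ps G -> (forall n r, meas Ps (fun w => u n w <= r)) ->
  (forall w, G w -> Un_cv (fun n => u n w) (f w)) ->
  meas Ps (fun w => G w /\ f w <= c).
Proof.
  intros HG Hu Hcv.
  apply (meas_ext (fun w => G w /\ forall m : nat, exists N, forall n, (N <= n)%nat ->
                                   u n w <= c + / INR (S m))).
  - intros w; split; intros [Hg H]; split; auto.
    + apply Rnot_lt_le. intros Hlt.
      destruct (archimed_cor1 ((f w - c) / 2)) as [m0 [Hm0 Hm00]]; [lra|].
      destruct m0 as [|m]; [lia|].
      destruct (H m) as [N1 HN1]. destruct (Hcv w Hg ((f w - c) / 2)) as [N2 HN2]; [lra|].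
      specialize (HN1 (N1 + N2)%nat ltac:(lia)). specialize (HN2 (N1 + N2)%nat ltac:(lia)).
      unfold Rdist in HN2. pose proof (Rabs_def2 _ _ HN2). lra.
    + intros m. destruct (Hcv w Hg (/ INR (S m)) (inv_INR_S_pos m)) as [N HN].
      exists N. intros n Hn. specialize (HN n Hn). unfold Rdist in HN.
      pose proof (Rabs_def2 _ _ HN). lra.
  - apply meas_and; auto. apply meas_forall; intros m. apply meas_cunion; intros N.
    apply meas_forall; intros n. apply meas_impl_const; auto.
Qed.

End Probability.

(** * Geometry of the weighted distance *)

Section Geometry.
Variables (L : nat) (d : nat -> nat) (p : nat -> R).
Hypothesis Hp_pos : forall l, (l < L)%nat -> 0 < p l.

Definition block_sqdist (x y : Yvec) (l : nat) : R :=
  rsum (d l) (fun i => (x l i - y l i) ^ 2).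
Definition sqdist (x y : Yvec) : R := rsum L (block_sqdist x y).
Definition wdist (x y : Yvec) : R := rsum L (fun l => / p l * block_sqdist x y l).

Lemma block_sqdist_nonneg x y l : 0 <= block_sqdist x y l.
Proof. apply rsum_nonneg; intros; apply pow2_ge_0. Qed.

Lemma sqdist_nonneg x y : 0 <= sqdist x y.
Proof. apply rsum_nonneg; intros; apply block_sqdist_nonneg. Qed.

Lemma wdist_nonneg x y : 0 <= wdist x y.
Proof.
  apply rsum_nonneg; intros. apply Rmult_le_pos; [|apply block_sqdist_nonneg].
  left; apply Rinv_0_lt_compat; auto.
Qed.

Lemma block_sqdist_sym x y l : block_sqdist x y l = block_sqdist y x l.
Proof. apply rsum_ext; intros; ring. Qed.

Lemma sqdist_sym x y : sqdist x y = sqdist y x.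
Proof. apply rsum_ext; intros; apply block_sqdist_sym. Qed.

Lemma wdist_sym x y : wdist x y = wdist y x.
Proof. apply rsum_ext; intros; rewrite block_sqdist_sym; auto. Qed.

Lemma wdist_self c : wdist c c = 0.
Proof.
  unfold wdist. rewrite <- (rsum_const0 L). apply rsum_ext; intros l _.
  unfold block_sqdist. rewrite (rsum_ext _ _ (fun _ => 0)) by (intros; ring).
  rewrite rsum_const0; ring.
Qed.

Lemma block_sqdist_tri x y z l :
  block_sqdist x z l <= 2 * block_sqdist x y l + 2 * block_sqdist y z l.
Proof.
  unfold block_sqdist. rewrite <- !rsum_scal, <- rsum_plus. apply rsum_le; intros.
  pose proof (pow2_ge_0 (x l k - 2 * y l k + z l k)). nra.
Qed.

Lemma sqdist_tri x y z : sqdist x z <= 2 * sqdist x y + 2 * sqdist y z.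
Proof.
  unfold sqdist. rewrite <- !rsum_scal, <- rsum_plus. apply rsum_le; intros.
  apply block_sqdist_tri.
Qed.

Lemma wdist_tri x y z : wdist x z <= 2 * wdist x y + 2 * wdist y z.
Proof.
  unfold wdist. rewrite <- !rsum_scal, <- rsum_plus. apply rsum_le; intros k Hk.
  pose proof (block_sqdist_tri x y z k).
  assert (0 < / p k) by (apply Rinv_0_lt_compat; auto). nra.
Qed.

Lemma sqdist_le_wdist x y : rsum L p = 1 -> sqdist x y <= wdist x y.
Proof.
  intros Hs. apply rsum_le; intros l Hl.
  assert (p l <= 1).
  { rewrite <- Hs. apply (rsum_term_le L p l); auto. intros; left; auto. }
  assert (1 <= / p l) by (rewrite <- Rinv_1; apply Rinv_le_contravar; auto).
  pose proof (block_sqdist_nonneg x y l). nra.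
Qed.

Lemma coord_le_wdist x y l i : (l < L)%nat -> (i < d l)%nat ->
  (x l i - y l i) ^ 2 <= p l * wdist x y.
Proof.
  intros Hl Hi.
  assert (H1 : (x l i - y l i) ^ 2 <= block_sqdist x y l).
  { apply (rsum_term_le (d l) (fun i => (x l i - y l i) ^ 2)); auto.
    intros; apply pow2_ge_0. }
  assert (H2 : / p l * block_sqdist x y l <= wdist x y).
  { apply (rsum_term_le L (fun l => / p l * block_sqdist x y l)); auto. intros.
    apply Rmult_le_pos; [left; apply Rinv_0_lt_compat; auto|apply block_sqdist_nonneg]. }
  specialize (Hp_pos l Hl). apply Rmult_le_compat_l with (r := p l) in H2; [|lra].
  rewrite <- Rmult_assoc, Rinv_r in H2 by lra. lra.
Qed.

Lemma sqdist_zero_Yeq x y : sqdist x y = 0 -> Yeq L d x y.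
Proof.
  intros H l i Hl Hi.
  pose proof (rsum_zero_each L _ (fun l _ => block_sqdist_nonneg x y l) H l Hl) as Hb.
  pose proof (rsum_zero_each (d l) _ (fun i _ => pow2_ge_0 (x l i - y l i)) Hb i Hi) as Hc.
  simpl in Hc. nra.
Qed.

Lemma wdist_cv (u : nat -> Yvec) c y :
  (forall l i, (l < L)%nat -> (i < d l)%nat -> Un_cv (fun k => u k l i) (c l i)) ->
  Un_cv (fun k => wdist (u k) y) (wdist c y).
Proof.
  intros H. apply rsum_cv; intros l Hl. apply CV_mult; [apply cv_const|].
  apply rsum_cv; intros i Hi. simpl.
  assert (Hd : Un_cv (fun k => u k l i - y l i) (c l i - y l i))
    by (apply CV_minus; [apply H; auto|apply cv_const]).
  apply CV_mult; [exact Hd|]. apply CV_mult; [exact Hd|apply cv_const].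
Qed.

Lemma wdist_to0_coords (u : nat -> Yvec) c :
  Un_cv (fun k => wdist (u k) c) 0 ->
  forall l i, (l < L)%nat -> (i < d l)%nat -> Un_cv (fun k => u k l i) (c l i).
Proof.
  intros H l i Hl Hi e He. pose proof (Hp_pos l Hl) as Hpl.
  destruct (H (e * e / p l)) as [N HN]; [apply Rdiv_lt_0_compat; nra|].
  exists N. intros n Hn. specialize (HN n Hn). unfold Rdist in *.
  rewrite Rminus_0_r, Rabs_right in HN by (apply Rle_ge, wdist_nonneg).
  pose proof (coord_le_wdist (u n) c l i Hl Hi).
  assert (p l * wdist (u n) c < e * e).
  { apply Rmult_lt_compat_l with (r := p l) in HN; auto. unfold Rdiv in HN.
    rewrite (Rmult_comm (e * e)), <- Rmult_assoc, Rinv_r, Rmult_1_l in HN by lra. auto. }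
  unfold Rabs. destruct (Rcase_abs (u n l i - c l i)); nra.
Qed.

Variable T : Yvec -> Yvec.
Hypothesis HT : firmly_nonexpansive L d T.

Lemma Yip_sqdist x y : Yip L d (Ysub x y) (Ysub x y) = sqdist x y.
Proof. apply rsum_ext; intros l Hl; apply rsum_ext; intros i Hi. unfold Ysub. ring. Qed.

Lemma fne_lipschitz x y : sqdist (T x) (T y) <= sqdist x y.
Proof.
  pose proof (HT x y) as H. rewrite Yip_sqdist in H.
  assert (Yip L d (Ysub x y) (Ysub (T x) (T y)) <= (sqdist x y + sqdist (T x) (T y)) / 2);
    [|lra].
  unfold sqdist, block_sqdist, Yip. rewrite <- rsum_plus. unfold Rdiv.
  rewrite Rmult_comm, <- rsum_scal. apply rsum_le; intros l Hl.
  rewrite <- rsum_plus, <- rsum_scal. apply rsum_le; intros i Hi. unfold Ysub.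
  pose proof (pow2_ge_0 ((x l i - y l i) - (T x l i - T y l i))). nra.
Qed.

Lemma fne_fixed_point_ineq x z : fixS L d T z ->
  sqdist (T x) x + sqdist (T x) z <= sqdist x z.
Proof.
  intros Hz. pose proof (HT x z) as H.
  set (I := rsum L (fun l => rsum (d l) (fun i => (x l i - z l i) * (T x l i - z l i)))).
  assert (E1 : Yip L d (Ysub x z) (Ysub (T x) (T z)) = I).
  { apply rsum_ext; intros l Hl; apply rsum_ext; intros i Hi.
    unfold Ysub. rewrite (Hz l i Hl Hi). auto. }
  assert (E2 : Yip L d (Ysub (T x) (T z)) (Ysub (T x) (T z)) = sqdist (T x) z).
  { apply rsum_ext; intros l Hl; apply rsum_ext; intros i Hi.
    unfold Ysub. rewrite (Hz l i Hl Hi). ring. }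
  assert (E3 : sqdist (T x) x = sqdist x z - 2 * I + sqdist (T x) z).
  { unfold sqdist, block_sqdist, I. rewrite <- rsum_scal, <- rsum_minus, <- rsum_plus.
    apply rsum_ext; intros l Hl.
    rewrite <- rsum_scal, <- rsum_minus, <- rsum_plus. apply rsum_ext; intros i Hi. ring. }
  rewrite E1, E2 in H. lra.
Qed.

Lemma block_sqdist_Shat x z l l' :
  block_sqdist (Shat T l x) z l' =
  if Nat.eqb l' l then block_sqdist (T x) z l else block_sqdist x z l'.
Proof.
  unfold block_sqdist, Shat. destruct (Nat.eqb_spec l' l) as [->|Hne];
    apply rsum_ext; intros k _; [auto|]. destruct (Nat.eqb_spec l' l); [lia|auto].
Qed.

Lemma wdist_Shat x z l : (l < L)%nat ->
  wdist (Shat T l x) z = wdist x z + / p l * (block_sqdist (T x) z l - block_sqdist x z l).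
Proof.
  intros Hl. unfold wdist.
  rewrite (rsum_ext L _ (fun l' => if Nat.eqb l' l then / p l * block_sqdist (T x) z l
                                   else / p l' * block_sqdist x z l')).
  - rewrite rsum_upd by auto. ring.
  - intros k Hk. rewrite block_sqdist_Shat. destruct (Nat.eqb_spec k l); subst; auto.
Qed.

Lemma wdist_expected_decrease z x : rsum L p = 1 -> fixS L d T z ->
  rsum L (fun l => p l * wdist (Shat T l x) z) <= wdist x z - sqdist (T x) x.
Proof.
  intros Hs Hz.
  rewrite (rsum_ext L _ (fun l => wdist x z * p l +
                                  (block_sqdist (T x) z l - block_sqdist x z l))).
  - rewrite rsum_plus, rsum_scal, Hs, rsum_minus.
    pose proof (fne_fixed_point_ineq x z Hz). unfold sqdist in *. lra.
  - intros l Hl. rewrite wdist_Shat by auto. field. specialize (Hp_pos l Hl); lra.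
Qed.

Lemma limit_fixed (y : nat -> Yvec) c : rsum L p = 1 ->
  Un_cv (fun k => wdist (y k) c) 0 ->
  (forall e, 0 < e -> exists N, forall n, (N <= n)%nat -> sqdist (T (y n)) (y n) < e) ->
  fixS L d T c.
Proof.
  intros Hs HWc HQ. apply sqdist_zero_Yeq, le_all_pos_zero; [apply sqdist_nonneg|].
  intros e He.
  destruct (HWc (e / 12)) as [N1 HN1]; [lra|]. destruct (HQ (e / 8)) as [N2 HN2]; [lra|].
  specialize (HN1 (N1 + N2)%nat ltac:(lia)). specialize (HN2 (N1 + N2)%nat ltac:(lia)).
  set (z := y (N1 + N2)%nat) in *. unfold Rdist in HN1.
  rewrite Rminus_0_r, Rabs_right in HN1 by (apply Rle_ge, wdist_nonneg).
  pose proof (sqdist_tri (T c) (T z) c). pose proof (fne_lipschitz c z).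
  pose proof (sqdist_tri (T z) z c). pose proof (sqdist_le_wdist z c Hs).
  rewrite (sqdist_sym c z) in *. lra.
Qed.

(** ** An Opial-type convergence criterion *)

Lemma wdist_bounded_subseq (x : nat -> Yvec) zs C :
  (forall n, wdist (x n) zs <= C) ->
  exists phi, strictly_incr phi /\ exists c : Yvec,
    forall l i, (l < L)%nat -> (i < d l)%nat -> Un_cv (fun k => x (phi k) l i) (c l i).
Proof.
  intros HC. assert (HC0 : 0 <= C) by (pose proof (wdist_nonneg (x 0%nat) zs); pose proof (HC 0%nat); lra).
  destruct (bw_subseq_coords (coords L d) x) as [phi [Hphi [c Hc]]].
  - intros l i Hin. apply coords_In in Hin as [Hl Hi].
    assert (Hpc : 0 <= p l * C) by (apply Rmult_le_pos; [left; apply Hp_pos|]; auto).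
    exists (zs l i - (p l * C + 1)), (zs l i + (p l * C + 1)). intros n.
    assert (H1 : (x n l i - zs l i) ^ 2 <= p l * C).
    { eapply Rle_trans; [apply coord_le_wdist; auto|].
      apply Rmult_le_compat_l; [left; apply Hp_pos|]; auto. }
    pose proof (abs_le_of_sq_le _ _ Hpc H1) as H2.
    pose proof (Rle_abs (x n l i - zs l i)).
    pose proof (Rle_abs (- (x n l i - zs l i))). rewrite Rabs_Ropp in *. lra.
  - exists phi. split; auto. exists c. intros l i Hl Hi. apply Hc, coords_In; auto.
Qed.

Lemma cluster_point_limit (x : nat -> Yvec) (D : nat -> nat -> Yvec) psi c :
  (forall k, (k <= psi k)%nat) -> fixS L d T c ->
  Un_cv (fun k => wdist (x (psi k)) c) 0 ->
  (forall n m, (exists z, fixS L d T z /\ wdist z (x n) < / INR (S m)) ->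
     wdist (D n m) (x n) < / INR (S m)) ->
  (forall n m, CauchyS (fun k => wdist (x k) (D n m))) ->
  Un_cv (fun k => wdist (x k) c) 0.
Proof.
  intros Hpsi Hc HWc HDnear HDcauchy e He.
  destruct (archimed_cor1 (e / 20)) as [m0 [Hm0 Hm00]]; [lra|].
  destruct m0 as [|m]; [lia|]. set (dl := / INR (S m)) in *.
  assert (Hdl : 0 < dl) by apply inv_INR_S_pos.
  destruct (HWc dl Hdl) as [K0 HK0]. specialize (HK0 K0 (le_n _)). unfold Rdist in HK0.
  rewrite Rminus_0_r, Rabs_right in HK0 by (apply Rle_ge, wdist_nonneg).
  set (n0 := psi K0) in *. set (z := D n0 m).
  assert (Hz1 : wdist z (x n0) < dl).
  { apply HDnear. exists c. split; auto. rewrite wdist_sym; auto. }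
  assert (Hz2 : wdist z c < 4 * dl) by (pose proof (wdist_tri z (x n0) c); lra).
  (* The distances to z converge; along the subsequence the limit is wdist c z. *)
  destruct (cauchy_cv _ (HDcauchy n0 m)) as [r Hr].
  assert (Hr2 : r = wdist z c).
  { rewrite wdist_sym. apply (UL_sequence (fun k => wdist (x (psi k)) z)).
    - apply (subseq_cv (fun k => wdist (x k) z) r psi Hpsi Hr).
    - apply wdist_cv. intros l i Hl Hi.
      apply (wdist_to0_coords (fun k => x (psi k))); auto. }
  destruct (Hr dl Hdl) as [N HN]. exists N. intros n Hn. specialize (HN n Hn). fold z in HN.
  unfold Rdist in *. rewrite Rminus_0_r, Rabs_right by (apply Rle_ge, wdist_nonneg).
  pose proof (Rle_abs (wdist (x n) z - r)). pose proof (wdist_tri (x n) z c). lra.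
Qed.

Lemma opial_convergence (x : nat -> Yvec) (D : nat -> nat -> Yvec) zs :
  rsum L p = 1 -> CauchyS (fun n => wdist (x n) zs) ->
  (forall e, 0 < e -> exists N, forall n, (N <= n)%nat -> sqdist (T (x n)) (x n) < e) ->
  (forall n m, (exists z, fixS L d T z /\ wdist z (x n) < / INR (S m)) ->
     wdist (D n m) (x n) < / INR (S m)) ->
  (forall n m, CauchyS (fun k => wdist (x k) (D n m))) ->
  exists c, fixS L d T c /\
    forall l i, (l < L)%nat -> (i < d l)%nat -> Un_cv (fun k => x k l i) (c l i).
Proof.
  intros Hs HC HQ HDnear HDcauchy.
  destruct (cauchy_bounded _ HC) as [N0 HN0].
  destruct (wdist_bounded_subseq (fun k => x (N0 + k)%nat) zs (wdist (x N0) zs + 1))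
    as [phi [Hphi [c Hc]]]; [intros n; apply HN0; lia|].
  set (psi := fun k => (N0 + phi k)%nat).
  assert (Hpsi : forall k, (k <= psi k)%nat)
    by (intros k; unfold psi; pose proof (strictly_incr_ge phi Hphi k); lia).
  assert (HWc : Un_cv (fun k => wdist (x (psi k)) c) 0)
    by (rewrite <- (wdist_self c); apply wdist_cv; auto).
  assert (Hfix : fixS L d T c).
  { apply (limit_fixed (fun k => x (psi k))); auto.
    intros e He. destruct (HQ e He) as [N HN]. exists N. intros n Hn.
    apply HN. specialize (Hpsi n). lia. }
  exists c. split; auto.
  apply wdist_to0_coords, (cluster_point_limit x D psi); auto.
Qed.

End Geometry.

(** * The law of the history of an i.i.d. block sequence *)

Section RandomBlocks.
Variables (Ps : ProbSpace) (xi : nat -> Omega Ps -> nat) (L : nat) (p : nat -> R).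
Hypothesis Hxi_meas : forall k l, meas Ps (fun w => xi k w = l).
Hypothesis Hxi_range : forall k w, (1 <= k)%nat -> (xi k w < L)%nat.
Hypothesis Hxi_law : forall k l, (1 <= k)%nat -> (l < L)%nat ->
  Pr Ps (fun w => xi k w = l) = p l.
Hypothesis Hp_pos : forall l, (l < L)%nat -> 0 < p l.
Hypothesis Hindep : indep_discrete Ps xi.

Fixpoint history (n : nat) (w : Omega Ps) : list nat :=
  match n with O => nil | S m => xi (S m) w :: history m w end.

Definition valid_hist (s : list nat) : Prop := forall x, In x s -> (x < L)%nat.

Fixpoint histories (n : nat) : list (list nat) :=
  match n with
  | O => nil :: nil
  | S m => flat_map (fun h => map (fun l => l :: h) (seq 0 L)) (histories m)
  end.

Lemma histories_In n s : length s = n -> valid_hist s -> In s (histories n).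
Proof.
  revert s; induction n as [|n IH]; intros s Hl Hv.
  - destruct s; simpl in *; [auto|lia].
  - destruct s as [|x s]; simpl in Hl; [lia|]. simpl. apply in_flat_map. exists s. split.
    + apply IH; [lia|]. intros y Hy; apply Hv; simpl; auto.
    + apply in_map_iff. exists x. split; auto. apply in_seq.
      assert (x < L)%nat by (apply Hv; simpl; auto). lia.
Qed.

Lemma history_length n w : length (history n w) = n.
Proof. induction n; simpl; auto. Qed.

Lemma history_valid n w : valid_hist (history n w).
Proof.
  induction n; simpl; intros x Hx; [tauto|].
  destruct Hx as [<-|Hx]; auto. apply Hxi_range; lia.
Qed.

Lemma history_enumerated n w : exists j, history n w = nth j (histories n) nil.
Proof.
  destruct (In_nth _ _ nil (histories_In n (history n w) (history_length n w)
                                            (history_valid n w))) as [j [_ Hj]].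
  eauto.
Qed.

Lemma meas_history_eq n s : meas Ps (fun w => history n w = s).
Proof.
  revert s. induction n; intros s; simpl.
  - apply meas_const.
  - destruct s as [|x s].
    + apply (meas_ext _ (fun _ => False)); [intros; split; [tauto|discriminate]|].
      apply meas_false.
    + apply (meas_ext _ (fun w => xi (S n) w = x /\ history n w = s)).
      * intros w; split; [intros [-> ->]; auto|intros H; injection H; auto].
      * apply meas_and; auto.
Qed.

(* Events defined through the history are measurable (the history takes
   finitely many values). *)
Lemma meas_history_fun n (Q : list nat -> Omega Ps -> Prop) :
  (forall s, meas Ps (Q s)) -> meas Ps (fun w => Q (history n w) w).
Proof.
  intros HQ.
  apply (meas_ext _ (fun w => exists j, history n w = nth j (histories n) nil /\
                                        Q (nth j (histories n) nil) w)).
  - intros w; split; [intros [j [-> H]]; auto|].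
    intros H. destruct (history_enumerated n w) as [j Hj]. exists j. rewrite <- Hj. auto.
  - apply meas_cunion. intros j. apply meas_and; auto. apply meas_history_eq.
Qed.

Lemma meas_history (n : nat) (Q : list nat -> Prop) :
  meas Ps (fun w => Q (history n w)).
Proof. apply (meas_history_fun n (fun s _ => Q s)). intros; apply meas_const. Qed.

Lemma meas_history2 (n m : nat) (Q : list nat -> list nat -> Prop) :
  meas Ps (fun w => Q (history n w) (history m w)).
Proof.
  apply (meas_history_fun n (fun s w => Q s (history m w))).
  intros s; apply meas_history.
Qed.

Definition hist_weight (s : list nat) : R := fold_right (fun l acc => p l * acc) 1 s.

Fixpoint countdown (m : nat) : list nat :=
  match m with O => nil | S k => S k :: countdown k end.

Lemma countdown_In m k : In k (countdown m) <-> (1 <= k <= m)%nat.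
Proof. induction m; simpl; [lia|]. rewrite IHm. lia. Qed.

Lemma countdown_NoDup m : NoDup (countdown m).
Proof. induction m; simpl; constructor; auto. rewrite countdown_In. lia. Qed.

Lemma history_eq_iff m w s : length s = m ->
  (history m w = s <-> forall k, In k (countdown m) -> xi k w = nth (m - k) s 0%nat).
Proof.
  revert s; induction m as [|m IH]; intros s Hl.
  - destruct s; simpl in *; [|lia]. split; auto. intros; tauto.
  - destruct s as [|x s]; simpl in Hl; [lia|]. cbn [history countdown].
    assert (Hn : forall k, (1 <= k <= m)%nat -> nth (S m - k) (x :: s) 0%nat = nth (m - k) s 0%nat).
    { intros k Hk. replace (S m - k)%nat with (S (m - k)) by lia. reflexivity. }
    assert (H0 : nth (S m - S m) (x :: s) 0%nat = x) by (rewrite Nat.sub_diag; reflexivity).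
    split.
    + intros H. injection H as H1 H2. intros k [<-|Hk]; [rewrite H0; auto|].
      apply countdown_In in Hk as Hk'. rewrite Hn by auto.
      apply (IH s ltac:(lia)); auto.
    + intros H. f_equal.
      * specialize (H (S m) (or_introl eq_refl)). rewrite H0 in H; auto.
      * apply (IH s ltac:(lia)). intros k Hk. apply countdown_In in Hk as Hk'.
        rewrite (H k (or_intror Hk)). apply Hn; auto.
Qed.

Lemma fold_countdown m s (a : nat -> nat) : length s = m -> valid_hist s ->
  (forall k, In k (countdown m) -> a k = nth (m - k) s 0%nat) ->
  fold_right (fun k acc => Pr Ps (fun w => xi k w = a k) * acc) 1 (countdown m) =
  hist_weight s.
Proof.
  revert s a. induction m as [|m IH]; intros s a Hl Hv Ha.
  - destruct s; simpl in *; auto; lia.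
  - destruct s as [|x s]; simpl in Hl; [lia|]. cbn [countdown fold_right hist_weight].
    rewrite (Ha (S m) (or_introl eq_refl)), Nat.sub_diag. simpl nth.
    rewrite Hxi_law by (try lia; apply Hv; simpl; auto). unfold hist_weight; simpl. f_equal.
    apply IH; [lia|intros y Hy; apply Hv; simpl; auto|].
    intros k Hk. rewrite Ha by (simpl; auto). apply countdown_In in Hk.
    replace (S m - k)%nat with (S (m - k)) by lia. auto.
Qed.

Lemma Pr_cylinder m s : length s = m -> valid_hist s ->
  Pr Ps (fun w => history m w = s) = hist_weight s.
Proof.
  intros Hl Hv.
  rewrite (Pr_ext _ _ (fun w => forall k, In k (countdown m) ->
                                  xi k w = (fun k => nth (m - k) s 0%nat) k))
    by (intros w; apply history_eq_iff; auto).
  rewrite Hindep.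
  - apply fold_countdown; auto.
  - apply countdown_NoDup.
  - intros k Hk; apply countdown_In in Hk; lia.
Qed.

(* expect n f h: the expectation of f over the n draws following the
   history h, computed by conditioning on one draw at a time. *)
Fixpoint expect (n : nat) (f : list nat -> R) (h : list nat) : R :=
  match n with
  | O => f h
  | S n' => rsum L (fun l => p l * expect n' f (l :: h))
  end.

Definition indicator (P : list nat -> Prop) (h : list nat) : R :=
  if excluded_middle_informative (P h) then 1 else 0.

Lemma Pr_history_after n m s (P : list nat -> Prop) : length s = m -> valid_hist s ->
  Pr Ps (fun w => history m w = s /\ P (history (n + m) w)) =
  hist_weight s * expect n (indicator P) s.
Proof.
  revert m s. induction n as [|n IH]; intros m s Hl Hv.
  - simpl. unfold indicator. destruct (excluded_middle_informative (P s)).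
    + rewrite (Pr_ext _ _ (fun w => history m w = s)), Pr_cylinder; auto; [lra|].
      intros w; split; [tauto|]. intros H; split; auto; rewrite H; auto.
    + rewrite (Pr_ext _ _ (fun _ => False)), Pr_empty; [lra|].
      intros w; split; [|tauto]. intros [H1 H2]; rewrite H1 in H2; auto.
  - rewrite (Pr_ext _ _ (fun w => exists l, (l < L)%nat /\
               (history (S m) w = l :: s /\ P (history (n + S m) w)))).
    + rewrite Pr_finite_union.
      * simpl expect. rewrite <- rsum_scal. apply rsum_ext. intros l Hl'.
        rewrite IH; simpl; auto; [lra|]. intros y [<-|Hy]; auto.
      * intros l _. apply meas_and; [apply meas_history_eq|apply meas_history].
      * intros j k w _ _ Hjk [H1 _] [H2 _]. rewrite H1 in H2. injection H2; auto.
    + intros w. rewrite Nat.add_succ_r. simpl. split.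
      * intros [H1 H2]. exists (xi (S m) w). split; [apply Hxi_range; lia|].
        rewrite H1. auto.
      * intros [l [_ [H1 H2]]]. injection H1 as _ H1. auto.
Qed.

Lemma Pr_history n (P : list nat -> Prop) :
  Pr Ps (fun w => P (history n w)) = expect n (indicator P) nil.
Proof.
  rewrite (Pr_ext _ _ (fun w => history 0 w = nil /\ P (history (n + 0) w))).
  - rewrite Pr_history_after; auto; [simpl; lra|]. intros x [].
  - intros w. rewrite Nat.add_0_r. simpl. tauto.
Qed.

Lemma p_sum_one : rsum L p = 1.
Proof.
  pose proof (Pr_history 1 (fun _ => True)) as H.
  rewrite Pr_full in H. simpl in H. rewrite H. apply rsum_ext. intros l _.
  unfold indicator. destruct (excluded_middle_informative True); [lra|tauto].
Qed.

Lemma expect_mono n f g h : (forall h', f h' <= g h') -> expect n f h <= expect n g h.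
Proof.
  revert h; induction n; simpl; intros h H; auto. apply rsum_le; intros.
  apply Rmult_le_compat_l; [left; apply Hp_pos|]; auto.
Qed.

Lemma expect_affine n f a b h :
  expect n (fun h' => a * f h' + b) h = a * expect n f h + b.
Proof.
  revert h; induction n; simpl; intros h; auto.
  rewrite (rsum_ext L _ (fun l => a * (p l * expect n f (l :: h)) + b * p l)).
  - rewrite rsum_plus, rsum_scal, rsum_scal, p_sum_one. ring.
  - intros l _. rewrite IHn. ring.
Qed.

Definition supermartingale (X : list nat -> R) : Prop :=
  forall h, rsum L (fun l => p l * X (l :: h)) <= X h.

Lemma expect_super n X h : supermartingale X -> expect n X h <= X h.
Proof.
  revert h; induction n; simpl; intros h H; [lra|].
  eapply Rle_trans; [|apply H]. apply rsum_le; intros.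
  apply Rmult_le_compat_l; [left; apply Hp_pos|]; auto.
Qed.

Lemma Pr_markov n (P : list nat -> Prop) (g : list nat -> R) :
  (forall h, indicator P h <= g h) -> Pr Ps (fun w => P (history n w)) <= expect n g nil.
Proof. intros H. rewrite Pr_history. apply expect_mono; auto. Qed.

(** * Almost sure convergence of nonnegative supermartingales *)

(* Scanning a path X (of the successive prefixes of h) for upcrossings of
   [a, b]: the state records whether an upcrossing is in progress (the path
   went to or below a and has not yet reached b) and how many upcrossings
   were completed. *)
Fixpoint upcross_state (X : list nat -> R) (a b : R) (h : list nat) : bool * nat :=
  match h with
  | nil => (if Rle_dec (X nil) a then true else false, 0%nat)
  | l :: h' =>
      let (up, U) := upcross_state X a b h' in
      if up then (if Rle_dec b (X (l :: h')) then (false, S U) else (true, U))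
      else (if Rle_dec (X (l :: h')) a then true else false, U)
  end.

Definition upcrossings X a b h : nat := snd (upcross_state X a b h).

(* The gain of the strategy that holds one unit while an upcrossing is in
   progress. *)
Fixpoint upcross_gain (X : list nat -> R) (a b : R) (h : list nat) : R :=
  match h with
  | nil => 0
  | l :: h' => upcross_gain X a b h' +
               (if fst (upcross_state X a b h') then X (l :: h') - X h' else 0)
  end.

Section Upcrossings.
Variables (X : list nat -> R) (a b : R).
Hypothesis Hab : a < b.

Lemma upcross_gain_ge h :
  upcross_gain X a b h >= (b - a) * INR (upcrossings X a b h) +
                          (if fst (upcross_state X a b h) then X h - a else 0).
Proof.
  unfold upcrossings. induction h as [|l h IH]; simpl.
  - destruct (Rle_dec (X nil) a); simpl; lra.
  - destruct (upcross_state X a b h) as [up U]. simpl in *. destruct up.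
    + destruct (Rle_dec b (X (l :: h))); cbn [fst snd]; [rewrite S_INR; nra|lra].
    + destruct (Rle_dec (X (l :: h)) a); simpl; lra.
Qed.

Lemma upcrossings_step l h : (upcrossings X a b h <= upcrossings X a b (l :: h))%nat.
Proof.
  unfold upcrossings. simpl. destruct (upcross_state X a b h) as [up U]; simpl.
  destruct up; [destruct (Rle_dec b (X (l :: h)))|destruct (Rle_dec (X (l :: h)) a)];
    simpl; lia.
Qed.

Lemma upcrossings_mono e h : (upcrossings X a b h <= upcrossings X a b (e ++ h))%nat.
Proof.
  induction e as [|l e IH]; simpl; auto.
  pose proof (upcrossings_step l (e ++ h)). lia.
Qed.

Lemma upcross_start h : X h < a -> fst (upcross_state X a b h) = true.
Proof.
  intros Hx. destruct h as [|l h]; simpl.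
  - destruct (Rle_dec (X nil) a); auto; lra.
  - destruct (upcross_state X a b h) as [up U]. destruct up.
    + destruct (Rle_dec b (X (l :: h))); auto; lra.
    + destruct (Rle_dec (X (l :: h)) a); auto; lra.
Qed.

Lemma upcross_stop e h : fst (upcross_state X a b h) = true ->
  fst (upcross_state X a b (e ++ h)) = false ->
  (S (upcrossings X a b h) <= upcrossings X a b (e ++ h))%nat.
Proof.
  unfold upcrossings. intros Hup. induction e as [|l e IH]; simpl; [congruence|].
  destruct (upcross_state X a b (e ++ h)) as [up U] eqn:E. simpl in IH.
  destruct up.
  - destruct (Rle_dec b (X (l :: e ++ h))); simpl; [|discriminate].
    intros _. pose proof (upcrossings_mono e h) as Hm. unfold upcrossings in Hm.
    rewrite E in Hm. simpl in Hm. lia.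
  - intros _. specialize (IH eq_refl).
    destruct (Rle_dec (X (l :: e ++ h)) a); simpl; lia.
Qed.

Lemma upcross_complete e h : fst (upcross_state X a b h) = true -> e <> nil ->
  b < X (e ++ h) -> (S (upcrossings X a b h) <= upcrossings X a b (e ++ h))%nat.
Proof.
  intros Hup Hne Hb. destruct e as [|l e]; [congruence|].
  destruct (fst (upcross_state X a b (e ++ h))) eqn:E.
  - pose proof (upcrossings_mono e h). unfold upcrossings in *. simpl in *.
    destruct (upcross_state X a b (e ++ h)) as [up U]. simpl in E. subst up.
    destruct (Rle_dec b (X (l :: e ++ h))); simpl in *; [lia|lra].
  - pose proof (upcross_stop e h Hup E). pose proof (upcrossings_step l (e ++ h)).
    simpl in *. lia.
Qed.

Lemma upcross_indicator_bound h K : 0 <= a -> (forall h, 0 <= X h) -> (1 <= K)%nat ->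
  indicator (fun h => (K <= upcrossings X a b h)%nat) h <=
  / ((b - a) * INR K) * upcross_gain X a b h + a / ((b - a) * INR K).
Proof.
  intros Ha HX HK. pose proof (upcross_gain_ge h) as Hi.
  assert (Hx : (if fst (upcross_state X a b h) then X h - a else 0) >= - a)
    by (destruct (fst _); specialize (HX h); lra).
  assert (HKp : 0 < INR K) by (apply lt_0_INR; lia).
  assert (Hc : 0 < (b - a) * INR K) by (apply Rmult_lt_0_compat; lra).
  replace (/ ((b - a) * INR K) * upcross_gain X a b h + a / ((b - a) * INR K))
    with ((upcross_gain X a b h + a) / ((b - a) * INR K)) by (field; lra).
  pose proof (pos_INR (upcrossings X a b h)).
  unfold indicator. destruct (excluded_middle_informative _) as [HU|HU].
  - apply le_INR in HU. apply Rmult_le_reg_r with ((b - a) * INR K); auto.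
    unfold Rdiv. rewrite Rmult_assoc, Rinv_l by lra.
    assert ((b - a) * INR K <= (b - a) * INR (upcrossings X a b h))
      by (apply Rmult_le_compat_l; lra).
    lra.
  - apply Rmult_le_pos; [nra|]. left; apply Rinv_0_lt_compat; auto.
Qed.

End Upcrossings.

Lemma history_extends n k w : exists e, length e = k /\ history (k + n) w = e ++ history n w.
Proof.
  induction k as [|k [e [He Hh]]]; [exists nil; auto|].
  exists (xi (S (k + n)) w :: e). simpl. rewrite Hh. auto.
Qed.

Section Supermartingale.
Variable X : list nat -> R.
Hypothesis HX_nonneg : forall h, 0 <= X h.
Hypothesis HX_super : supermartingale X.

Lemma upcross_gain_super a b : supermartingale (upcross_gain X a b).
Proof.
  intros h. simpl. destruct (fst (upcross_state X a b h)).
  - rewrite (rsum_ext L _ (fun l => (upcross_gain X a b h - X h) * p l + p l * X (l :: h)))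
      by (intros; ring).
    rewrite rsum_plus, rsum_scal, p_sum_one. specialize (HX_super h). lra.
  - rewrite (rsum_ext L _ (fun l => upcross_gain X a b h * p l)) by (intros; ring).
    rewrite rsum_scal, p_sum_one. lra.
Qed.

Lemma Pr_upcrossings_bound a b K n : 0 <= a -> a < b -> (1 <= K)%nat ->
  Pr Ps (fun w => (K <= upcrossings X a b (history n w))%nat) <= a / ((b - a) * INR K).
Proof.
  intros Ha Hab HK.
  eapply Rle_trans;
    [apply (Pr_markov n (fun h => (K <= upcrossings X a b h)%nat));
     intros h; apply upcross_indicator_bound; auto|].
  rewrite expect_affine.
  assert (0 <= / ((b - a) * INR K)).
  { left; apply Rinv_0_lt_compat, Rmult_lt_0_compat; [lra|apply lt_0_INR; lia]. }
  assert (expect n (upcross_gain X a b) nil <= 0)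
    by (change 0 with (upcross_gain X a b nil); apply expect_super, upcross_gain_super).
  nra.
Qed.

Definition oscillates (w : Omega Ps) (M i : nat) : Prop :=
  OscS (fun n => X (history n w)) M i.

Lemma oscillation_upcrossings w M i : oscillates w M i ->
  forall K, exists n, (K <= upcrossings X (grid M i) (grid M (S i)) (history n w))%nat.
Proof.
  intros [Hbelow Habove]. set (a := grid M i) in *. set (b := grid M (S i)) in *.
  assert (Hab : a < b) by apply grid_lt.
  assert (Step : forall N, exists n,
             (S (upcrossings X a b (history N w)) <= upcrossings X a b (history n w))%nat).
  { intros N. destruct (Hbelow N) as [n1 [Hn1 Hx1]].
    destruct (Habove (S n1)) as [n2 [Hn2 Hx2]]. exists n2.
    destruct (history_extends N (n1 - N) w) as [e1 [_ He1]].
    destruct (history_extends n1 (n2 - n1) w) as [e2 [Hl2 He2]].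
    replace (n1 - N + N)%nat with n1 in He1 by lia.
    replace (n2 - n1 + n1)%nat with n2 in He2 by lia.
    rewrite He2 in Hx2 |- *.
    assert (e2 <> nil) by (intros ->; simpl in Hl2; lia).
    pose proof (upcross_complete X a b e2 (history n1 w) (upcross_start X a b Hab _ Hx1) H Hx2).
    pose proof (upcrossings_mono X a b e1 (history N w)). rewrite <- He1 in *. lia. }
  intros K. induction K as [|K [n Hn]]; [exists 0%nat; lia|].
  destruct (Step n) as [n' Hn']. exists n'. lia.
Qed.

Lemma meas_oscillates M i : meas Ps (fun w => oscillates w M i).
Proof.
  unfold oscillates, OscS.
  apply meas_and; apply meas_forall; intros N; apply meas_cunion; intros n;
    apply meas_and; try apply meas_const.
  - apply (meas_history n (fun h => X h < grid M i)).
  - apply (meas_history n (fun h => grid M (S i) < X h)).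
Qed.

Lemma Pr_oscillates_null M i : Pr Ps (fun w => oscillates w M i) = 0.
Proof.
  set (a := grid M i). set (b := grid M (S i)).
  assert (Ha : 0 <= a) by apply grid_nonneg. assert (Hab : a < b) by apply grid_lt.
  apply (null_of_bounds _ _ (a / (b - a))); [apply meas_oscillates|]. intros K.
  set (U := fun n w => (S K <= upcrossings X a b (history n w))%nat).
  assert (HU : forall n, meas Ps (U n))
    by (intros n; apply (meas_history n (fun h => (S K <= upcrossings X a b h)%nat))).
  eapply Rle_trans.
  - apply (Pr_mono _ _ (fun w => exists n, U n w));
      [apply meas_oscillates|apply meas_cunion; auto|].
    intros w Hw. apply (oscillation_upcrossings w M i Hw).
  - replace (a / (b - a) / INR (S K)) with (a / ((b - a) * INR (S K)))
      by (field; split; [lra|apply not_0_INR; lia]).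
    apply incr_union_bound; auto.
    + intros n w Hw. unfold U in *. simpl.
      pose proof (upcrossings_step X a b (xi (S n) w) (history n w)). lia.
    + intros n. apply Pr_upcrossings_bound; auto; lia.
Qed.

Lemma meas_diverges : meas Ps (fun w => InftyS (fun n => X (history n w))).
Proof.
  apply meas_forall; intros K. apply meas_cunion; intros N.
  apply meas_forall; intros n. apply meas_impl_const.
  apply (meas_history n (fun h => INR K <= X h)).
Qed.

(* Markov's inequality rules out divergence to infinity. *)
Lemma Pr_diverges_null : Pr Ps (fun w => InftyS (fun n => X (history n w))) = 0.
Proof.
  set (A := fun K N w => forall n, (N <= n)%nat -> INR K <= X (history n w)).
  assert (HA : forall K N, meas Ps (A K N)).
  { intros K N. apply meas_forall; intros n. apply meas_impl_const.
    apply (meas_history n (fun h => INR K <= X h)). }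
  apply (null_of_bounds _ _ (X nil)); [apply meas_diverges|]. intros K.
  assert (HK : 0 < INR (S K)) by apply INR_S_pos.
  eapply Rle_trans.
  - apply (Pr_mono _ _ (fun w => exists N, A (S K) N w));
      [apply meas_diverges|apply meas_cunion; auto|]. intros w Hw; apply Hw.
  - apply incr_union_bound; auto; [intros N w H n Hn; apply H; lia|]. intros N.
    eapply Rle_trans.
    + apply (Pr_mono _ _ (fun w => INR (S K) <= X (history N w)));
        [apply HA|apply (meas_history N (fun h => INR (S K) <= X h))|].
      intros w H; apply H; lia.
    + eapply Rle_trans.
      * apply (Pr_markov N (fun h => INR (S K) <= X h) (fun h => / INR (S K) * X h + 0)).
        intros h. unfold indicator. destruct (excluded_middle_informative _).
        -- apply Rmult_le_reg_l with (INR (S K)); auto.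
           rewrite Rplus_0_r, <- Rmult_assoc, Rinv_r by lra. lra.
        -- rewrite Rplus_0_r. apply Rmult_le_pos; auto. left; apply Rinv_0_lt_compat; auto.
      * rewrite expect_affine. pose proof (expect_super N X nil HX_super).
        unfold Rdiv. rewrite Rplus_0_r, (Rmult_comm (X nil)).
        apply Rmult_le_compat_l; auto. left; apply Rinv_0_lt_compat; auto.
Qed.

Lemma meas_CauchyS (Y : list nat -> R) :
  meas Ps (fun w => CauchyS (fun n => Y (history n w))).
Proof.
  apply meas_forall; intros m. apply meas_cunion; intros N.
  apply meas_forall; intros j. apply meas_forall; intros k.
  apply meas_impl_const, meas_impl_const.
  apply (meas_history2 j k (fun s t => Rabs (Y s - Y t) <= / INR (S m))).
Qed.

Theorem supermartingale_cauchy : Pr Ps (fun w => CauchyS (fun n => X (history n w))) = 1.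
Proof.
  set (N := fun k w => match k with
                       | O => InftyS (fun n => X (history n w))
                       | S M => exists i, oscillates w M i end).
  assert (HNm : forall k, meas Ps (N k)).
  { intros [|M]; [apply meas_diverges|]. apply meas_cunion; intros i; apply meas_oscillates. }
  assert (HN0 : forall k, Pr Ps (N k) = 0).
  { intros [|M]; [apply Pr_diverges_null|].
    apply null_union; intros i; [apply meas_oscillates|apply Pr_oscillates_null]. }
  assert (Hle : Pr Ps (fun w => ~ CauchyS (fun n => X (history n w))) <= 0).
  { rewrite <- (null_union _ N HNm HN0). apply Pr_mono.
    - apply meas_compl, meas_CauchyS.
    - apply meas_cunion; auto.
    - intros w Hw.
      destruct (path_trichotomy (fun n => X (history n w))) as [H|[H|[M [i H]]]]; auto.
      + tauto.
      + exists 0%nat; auto.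
      + exists (S M); simpl; eauto. }
  rewrite Pr_compl in Hle by apply meas_CauchyS.
  pose proof (Pr_le1 _ _ (meas_CauchyS X)). lra.
Qed.

End Supermartingale.

(** * The random block-coordinate iteration *)

Lemma prob1_along_history (A : list nat -> Omega Ps -> Prop) :
  (forall s, meas Ps (A s)) -> (forall s, Pr Ps (A s) = 1) ->
  meas Ps (fun w => forall n, A (history n w) w) /\
  Pr Ps (fun w => forall n, A (history n w) w) = 1.
Proof.
  intros Hm H1.
  set (B := fun n w => forall j, A (nth j (histories n) nil) w).
  assert (HB : forall n, meas Ps (B n) /\ Pr Ps (B n) = 1)
    by (intros n; apply prob1_forall; auto).
  destruct (prob1_forall _ B (fun n => proj1 (HB n)) (fun n => proj2 (HB n))) as [HBm HB1].
  assert (Hmeas : meas Ps (fun w => forall n, A (history n w) w))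
    by (apply meas_forall; intros n; apply meas_history_fun; auto).
  split; auto. apply (prob1_mono _ _ _ HBm Hmeas HB1).
  intros w Hw n. destruct (history_enumerated n w) as [j ->]. apply Hw.
Qed.

Section Iteration.
Variables (d : nat -> nat) (T : Yvec -> Yvec) (z0 zs : Yvec).
Hypothesis HT : firmly_nonexpansive L d T.
Hypothesis Hzs : fixS L d T zs.

Fixpoint iterate (h : list nat) : Yvec :=
  match h with nil => z0 | l :: h' => Shat T l (iterate h') end.

Lemma iterate_history w n :
  rbcd_iter T (fun k => xi k w) z0 n = iterate (history n w).
Proof. induction n; simpl; auto. rewrite IHn. auto. Qed.

Fixpoint cum_residual (h : list nat) : R :=
  match h with
  | nil => 0
  | l :: h' => cum_residual h' + sqdist L d (T (iterate h')) (iterate h')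
  end.

Lemma cum_residual_nonneg h : 0 <= cum_residual h.
Proof. induction h; simpl; [lra|]. pose proof (sqdist_nonneg L d (T (iterate h)) (iterate h)). lra. Qed.

Lemma wdist_supermartingale z : fixS L d T z ->
  supermartingale (fun h => wdist L d p (iterate h) z).
Proof.
  intros Hz h. simpl.
  pose proof (wdist_expected_decrease L d p Hp_pos T HT z (iterate h) p_sum_one Hz).
  pose proof (sqdist_nonneg L d (T (iterate h)) (iterate h)). lra.
Qed.

Lemma wdist_residual_supermartingale :
  supermartingale (fun h => wdist L d p (iterate h) zs + cum_residual h).
Proof.
  intros h. simpl.
  rewrite (rsum_ext L _ (fun l => p l * wdist L d p (Shat T l (iterate h)) zs +
      (cum_residual h + sqdist L d (T (iterate h)) (iterate h)) * p l)) by (intros; ring).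
  rewrite rsum_plus, rsum_scal, p_sum_one.
  pose proof (wdist_expected_decrease L d p Hp_pos T HT zs (iterate h) p_sum_one Hzs). lra.
Qed.

Definition near_fixed (s : list nat) (m : nat) : Yvec :=
  match excluded_middle_informative
          (exists z, fixS L d T z /\ wdist L d p z (iterate s) < / INR (S m)) with
  | left H => proj1_sig (constructive_indefinite_description _ H)
  | right _ => zs
  end.

Lemma near_fixed_fixed s m : fixS L d T (near_fixed s m).
Proof.
  unfold near_fixed. destruct (excluded_middle_informative _); auto.
  destruct (constructive_indefinite_description _ _) as [z Hz]; apply Hz.
Qed.

Lemma near_fixed_near s m :
  (exists z, fixS L d T z /\ wdist L d p z (iterate s) < / INR (S m)) ->
  wdist L d p (near_fixed s m) (iterate s) < / INR (S m).
Proof.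
  intros H. unfold near_fixed. destruct (excluded_middle_informative _); [|tauto].
  destruct (constructive_indefinite_description _ _) as [z Hz]; apply Hz.
Qed.

Definition path (w : Omega Ps) (n : nat) : Yvec := iterate (history n w).

Definition good_path (w : Omega Ps) : Prop :=
  CauchyS (fun n => wdist L d p (path w n) zs) /\
  CauchyS (fun n => wdist L d p (path w n) zs + cum_residual (history n w)) /\
  forall n m, CauchyS (fun k => wdist L d p (path w k) (near_fixed (history n w) m)).

Lemma good_path_as : meas Ps good_path /\ Pr Ps good_path = 1.
Proof.
  set (Wz := fun z h => wdist L d p (iterate h) z).
  assert (HW : forall z, fixS L d T z ->
     meas Ps (fun w => CauchyS (fun n => Wz z (history n w))) /\
     Pr Ps (fun w => CauchyS (fun n => Wz z (history n w))) = 1).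
  { intros z Hz. split; [apply meas_CauchyS|].
    apply supermartingale_cauchy; [intros; apply wdist_nonneg; auto|].
    apply wdist_supermartingale; auto. }
  set (Y := fun h => wdist L d p (iterate h) zs + cum_residual h).
  assert (HYm : meas Ps (fun w => CauchyS (fun n => Y (history n w)))) by apply meas_CauchyS.
  assert (HY1 : Pr Ps (fun w => CauchyS (fun n => Y (history n w))) = 1).
  { apply supermartingale_cauchy; [|apply wdist_residual_supermartingale].
    intros h. pose proof (wdist_nonneg L d p Hp_pos (iterate h) zs).
    pose proof (cum_residual_nonneg h). unfold Y. lra. }
  destruct (prob1_along_history
              (fun s w => forall m, CauchyS (fun n => Wz (near_fixed s m) (history n w))))
    as [HNm HN1];
    [intros s; apply meas_forall; intros m; apply HW, near_fixed_fixed|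
     intros s; apply prob1_forall; intros m; apply HW, near_fixed_fixed|].
  destruct (HW zs Hzs) as [HXm HX1].
  unfold good_path, path.
  split; [repeat apply meas_and; auto|].
  repeat apply prob1_and; auto; apply meas_and; auto.
Qed.

(* On a good path the residuals vanish: the accumulated residual is the
   difference of two convergent sequences. *)
Lemma good_path_residual w : good_path w ->
  forall e, 0 < e -> exists N, forall n, (N <= n)%nat ->
    sqdist L d (T (path w n)) (path w n) < e.
Proof.
  intros [Hc1 [Hc2 _]] e He.
  destruct (cauchy_cv _ Hc1) as [r1 Hr1]. destruct (cauchy_cv _ Hc2) as [r2 Hr2].
  pose proof (CV_minus _ _ _ _ Hr2 Hr1) as Hr. cbv beta in Hr.
  destruct (cv_increments _ _ Hr e He) as [N HN]. exists N. intros n Hn.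
  specialize (HN n Hn). unfold path in *. simpl history in HN. simpl cum_residual in HN.
  rewrite Rabs_right in HN; [lra|].
  pose proof (sqdist_nonneg L d (T (iterate (history n w))) (iterate (history n w))). lra.
Qed.

Lemma good_path_converges w : good_path w ->
  exists c, fixS L d T c /\
    forall l i, (l < L)%nat -> (i < d l)%nat -> Un_cv (fun k => path w k l i) (c l i).
Proof.
  intros Hw.
  apply (opial_convergence L d p Hp_pos T HT (path w)
           (fun n m => near_fixed (history n w) m) zs p_sum_one).
  - apply Hw.
  - apply good_path_residual; auto.
  - intros n m. apply near_fixed_near.
  - apply Hw.
Qed.

(* Paths along which the coordinates converge and the residuals vanish,
   expressed through countably many history events. *)
Definition converging_path (w : Omega Ps) : Prop :=
  (forall l i, (l < L)%nat -> (i < d l)%nat -> CauchyS (fun n => path w n l i)) /\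
  (forall m : nat, exists N, forall n, (N <= n)%nat ->
     sqdist L d (T (path w n)) (path w n) <= / INR (S m)).

Lemma meas_converging_path : meas Ps converging_path.
Proof.
  apply meas_and.
  - apply meas_forall; intros l. apply meas_forall; intros i.
    apply meas_impl_const, meas_impl_const.
    apply (meas_CauchyS (fun h => iterate h l i)).
  - apply meas_forall; intros m. apply meas_cunion; intros N.
    apply meas_forall; intros n. apply meas_impl_const.
    apply (meas_history n (fun h => sqdist L d (T (iterate h)) (iterate h) <= / INR (S m))).
Qed.

Lemma good_path_converging w : good_path w -> converging_path w.
Proof.
  intros Hw. destruct (good_path_converges w Hw) as [c [_ Hcv]]. split.
  - intros l i Hl Hi. apply (cv_cauchyS _ (c l i)), Hcv; auto.
  - intros m. destruct (good_path_residual w Hw (/ INR (S m)) (inv_INR_S_pos m)) as [N HN].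
    exists N. intros n Hn. left; auto.
Qed.

Definition limit_point (w : Omega Ps) : Yvec :=
  if excluded_middle_informative (converging_path w)
  then fun l i => limit_of (fun n => path w n l i)
  else zs.

Lemma limit_point_spec w : converging_path w ->
  forall l i, (l < L)%nat -> (i < d l)%nat -> Un_cv (fun n => path w n l i) (limit_point w l i).
Proof.
  intros Hg l i Hl Hi. unfold limit_point.
  destruct (excluded_middle_informative (converging_path w)); [|tauto].
  apply limit_of_spec, cauchy_cv, Hg; auto.
Qed.

(* The limit point is always a fixed point (by demiclosedness). *)
Lemma limit_point_fixed w : fixS L d T (limit_point w).
Proof.
  destruct (excluded_middle_informative (converging_path w)) as [Hg|Hg].
  - apply (limit_fixed L d p Hp_pos T HT (path w) _ p_sum_one).
    + rewrite <- (wdist_self L d p (limit_point w)). apply wdist_cv, limit_point_spec; auto.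
    + intros e He. destruct (archimed_cor1 e He) as [m0 [Hm0 Hm00]].
      destruct m0 as [|m]; [lia|]. destruct (proj2 Hg m) as [N HN].
      exists N. intros n Hn. specialize (HN n Hn). lra.
  - unfold limit_point. destruct (excluded_middle_informative (converging_path w)); tauto.
Qed.

Lemma meas_limit_point_le l i c : (l < L)%nat -> (i < d l)%nat ->
  meas Ps (fun w => limit_point w l i <= c).
Proof.
  intros Hl Hi.
  apply (meas_ext _ (fun w => (converging_path w /\ limit_point w l i <= c) \/
                              (~ converging_path w /\ zs l i <= c))).
  - intros w. unfold limit_point. destruct (excluded_middle_informative (converging_path w)); tauto.
  - apply meas_or.
    + apply (meas_limit_le _ _ (fun n w => path w n l i)); [apply meas_converging_path| |].
      * intros n r. apply (meas_history n (fun h => iterate h l i <= r)).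
      * intros w Hw. apply limit_point_spec; auto.
    + apply meas_and; [apply meas_compl, meas_converging_path|apply meas_const].
Qed.

Theorem iterates_converge_as :
  exists (Z : Omega Ps -> Yvec) (E : Omega Ps -> Prop),
    (forall l i c, (l < L)%nat -> (i < d l)%nat -> meas Ps (fun w => Z w l i <= c)) /\
    (forall w, fixS L d T (Z w)) /\
    meas Ps E /\ Pr Ps E = 1 /\
    (forall w, E w -> forall l i, (l < L)%nat -> (i < d l)%nat ->
       Un_cv (fun k => rbcd_iter T (fun k => xi k w) z0 k l i) (Z w l i)).
Proof.
  destruct good_path_as as [Hm H1].
  exists limit_point, good_path.
  split; [intros; apply meas_limit_point_le; auto|].
  split; [apply limit_point_fixed|].
  split; [auto|]. split; [auto|].
  intros w Hw l i Hl Hi. apply (Un_cv_ext (fun k => path w k l i)).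
  - intros k. unfold path. rewrite iterate_history. auto.
  - apply limit_point_spec; auto. apply good_path_converging; auto.
Qed.

End Iteration.
End RandomBlocks.

Theorem mainTheorem3
  (L : nat) (d : nat -> nat) (S : Yvec -> Yvec)
  (HS : firmly_nonexpansive L d S)
  (Hfix : exists z, fixS L d S z)
  (Ps : ProbSpace) (xi : nat -> Omega Ps -> nat) (p : nat -> R)
  (Hxi_meas : forall k l, meas Ps (fun w => xi k w = l))
  (Hxi_range : forall k w, (1 <= k)%nat -> (xi k w < L)%nat)
  (Hxi_law : forall k l, (1 <= k)%nat -> (l < L)%nat ->
                Pr Ps (fun w => xi k w = l) = p l)
  (Hp_pos : forall l, (l < L)%nat -> 0 < p l)
  (Hindep : indep_discrete Ps xi)
  (z0 : Yvec) :
  exists (Z : Omega Ps -> Yvec) (E : Omega Ps -> Prop),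
    (forall l i c, (l < L)%nat -> (i < d l)%nat ->
        meas Ps (fun w => Z w l i <= c)) /\
    (forall w, fixS L d S (Z w)) /\
    meas Ps E /\ Pr Ps E = 1 /\
    (forall w, E w ->
       forall l i, (l < L)%nat -> (i < d l)%nat ->
         Un_cv (fun k => rbcd_iter S (fun k => xi k w) z0 k l i) (Z w l i)).
Proof.
  destruct Hfix as [zs Hzs].
  exact (iterates_converge_as Ps xi L p Hxi_meas Hxi_range Hxi_law Hp_pos Hindep
           d S z0 zs HS Hzs).
Qed.
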